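(* Let $T\ge1$ and $N\ge 1$ be integers, and let $\psi_j$, $\eta$, $q_0$ be as in the context. Then $$q_0(1)=\frac{1}{K},\qquad\text{where}\qquad \frac1K=2^{\frac{N-2}{2}}\prod_{j=1}^{\frac{N-2}{2}}(1-\cos\psi_j)\ \text{ ($N$ even)},\qquad \frac1K=2^{\frac{N-3}{2}}\prod_{j=1}^{\frac{N-1}{2}}(1-\cos\psi_j)\ \text{ ($N$ odd)},$$ and the normalized polynomial $q(z)=K\,q_0(z)$ (which satisfies $q(1)=1$) satisfies $q(-1)=P_N$, where $$P_N=\frac{T}{2+(N-1)T}\prod_{j=1}^{\frac{N-2}{2}}\cot^2\frac{\psi_j}{2}\ \text{ ($N$ even)},\qquad P_N=\prod_{j=1}^{\frac{N-1}{2}}\cot^2\frac{\psi_j}{2}\ \text{ ($N$ odd)}.$$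
   Context: Fix integers $T\ge 1$, $N\ge1$. Set $\psi_j=\dfrac{\pi(2+T(2j-1))}{2+(N-1)T}$. Define the polynomial $\eta$ by $\eta(z)=z(z+1)\prod_{j=1}^{\frac{N-2}{2}}(z-e^{i\psi_j})(z-e^{-i\psi_j})$ if $N$ is even, and $\eta(z)=z\prod_{j=1}^{\frac{N-1}{2}}(z-e^{i\psi_j})(z-e^{-i\psi_j})$ if $N$ is odd (empty products equal $1$). Define $$q_0(z)=\frac{T}{2+(N-1)T}\left(\Bigl(\frac1T+N\Bigr)\frac{\eta(z)}{z}-\eta'(z)\right),$$ a polynomial of degree at most $N-1$. *)

From Stdlib Require Import Reals ZArith.
Open Scope R_scope.

Fixpoint prodR (n : nat) (f : nat -> R) : R :=
  match n with
  | O => 1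
  | S k => prodR k f * f (S k)
  end.

Definition psi (T N j : nat) : R :=
  PI * (2 + INR T * (2 * INR j - 1)) / (2 + (INR N - 1) * INR T).

Definition mN (N : nat) : nat :=
  if Nat.even N then ((N - 2) / 2)%nat else ((N - 1) / 2)%nat.

(* eta(z), with each conjugate pair (z - e^{i psi})(z - e^{-i psi})
   written out as the real quadratic z^2 - 2 cos(psi) z + 1. *)
Definition eta (T N : nat) (z : R) : R :=
  (if Nat.even N then z * (z + 1) else z) *
  prodR (mN N) (fun j => z ^ 2 - 2 * cos (psi T N j) * z + 1).

(* value of q0 at a point z <> 0, given the value d = eta'(z) *)
Definition q0_at (T N : nat) (z d : R) : R :=
  INR T / (2 + (INR N - 1) * INR T) *
  ((/ INR T + INR N) * (eta T N z / z) - d).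

Definition invK (T N : nat) : R :=
  if Nat.even N then
    powerRZ 2 ((Z.of_nat N - 2) / 2)%Z *
    prodR ((N - 2) / 2) (fun j => 1 - cos (psi T N j))
  else
    powerRZ 2 ((Z.of_nat N - 3) / 2)%Z *
    prodR ((N - 1) / 2) (fun j => 1 - cos (psi T N j)).

Definition cot2 (x : R) : R := (cos x / sin x) ^ 2.

Definition PN (T N : nat) : R :=
  if Nat.even N then
    INR T / (2 + (INR N - 1) * INR T) *
    prodR ((N - 2) / 2) (fun j => cot2 (psi T N j / 2))
  else
    prodR ((N - 1) / 2) (fun j => cot2 (psi T N j / 2)).

(* At z = 1 and z = -1 every quadratic factor z^2 - 2 cos(psi_j) z + 1 of eta has
   derivative equal to z times its value, so the product Q of the m quadratic factors
   satisfies Q'(1) = m Q(1) and Q'(-1) = -m Q(-1).  This gives eta'(±1) in closed form,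
   and q0(1), q0(-1) become explicit multiples of Q(1) = 2^m prod (1 - cos psi_j) and
   Q(-1) = 2^m prod (1 + cos psi_j).  Since 0 < psi_j < pi, the half-angle identity
   (1 + cos psi) = cot^2(psi/2) (1 - cos psi) turns the quotient q0(-1)/q0(1) into the
   product of the cot^2(psi_j/2). *)

From Stdlib Require Import Reals ZArith Lia Lra.
From Coquelicot Require Import Coquelicot.
Open Scope R_scope.

Lemma prodR_ext (n : nat) (f g : nat -> R) :
  (forall j, (1 <= j <= n)%nat -> f j = g j) -> prodR n f = prodR n g.
Proof.
  induction n as [|k IH]; intros Hfg; simpl; [reflexivity|].
  rewrite IH, Hfg; [reflexivity | lia |]. intros j Hj. apply Hfg. lia.
Qed.

Lemma prodR_mul (n : nat) (f g : nat -> R) :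
  prodR n (fun j => f j * g j) = prodR n f * prodR n g.
Proof. induction n as [|k IH]; simpl; [ring | rewrite IH; ring]. Qed.

Lemma prodR_scale (n : nat) (a : R) (f : nat -> R) :
  prodR n (fun j => a * f j) = a ^ n * prodR n f.
Proof. induction n as [|k IH]; simpl; [ring | rewrite IH; ring]. Qed.

Lemma prodR_neq0 (n : nat) (f : nat -> R) :
  (forall j, (1 <= j <= n)%nat -> f j <> 0) -> prodR n f <> 0.
Proof.
  induction n as [|k IH]; intros Hf; simpl; [lra|].
  apply Rmult_integral_contrapositive_currified; [apply IH | apply Hf]; intros; try apply Hf; lia.
Qed.

Lemma derivable_pt_lim_eq (f : R -> R) (x l l' : R) :
  derivable_pt_lim f x l -> l = l' -> derivable_pt_lim f x l'.
Proof. intros H <-; exact H. Qed.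

Lemma derivable_pt_lim_prodR (f : nat -> R -> R) (x s : R) (n : nat) :
  (forall j, derivable_pt_lim (f j) x (s * f j x)) ->
  derivable_pt_lim (fun z => prodR n (fun j => f j z)) x
    (INR n * s * prodR n (fun j => f j x)).
Proof.
  intros Hf. induction n as [|k IH]; cbn [prodR].
  - eapply derivable_pt_lim_eq; [apply derivable_pt_lim_const | simpl; ring].
  - eapply derivable_pt_lim_eq.
    + apply (derivable_pt_lim_mult (fun z => prodR k (fun j => f j z)) (f (S k))); [exact IH | apply Hf].
    + rewrite S_INR. ring.
Qed.

(* On the unit points x = ±1, x * (x^2 - 2 a x + 1) = 2 x - 2 a. *)
Lemma derivable_pt_lim_quad_unit (a x : R) : x ^ 2 = 1 ->
  derivable_pt_lim (fun z => z ^ 2 - 2 * a * z + 1) x (x * (x ^ 2 - 2 * a * x + 1)).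
Proof.
  intros Hx. apply is_derive_Reals. auto_derive; auto.
  replace (x * (x ^ 2 - 2 * a * x + 1)) with (x * x ^ 2 - 2 * a * x ^ 2 + x) by ring.
  rewrite Hx. ring.
Qed.

Definition quad_prod (c : nat -> R) (m : nat) (z : R) : R :=
  prodR m (fun j => z ^ 2 - 2 * c j * z + 1).

Section QuadProd.

Variables (c : nat -> R) (m : nat).

Lemma derivable_pt_lim_quad_prod_unit (x : R) : x ^ 2 = 1 ->
  derivable_pt_lim (quad_prod c m) x (INR m * x * quad_prod c m x).
Proof.
  intros Hx. apply (derivable_pt_lim_prodR (fun j z => z ^ 2 - 2 * c j * z + 1)).
  intros j. now apply derivable_pt_lim_quad_unit.
Qed.

Lemma derivable_pt_lim_id_mul_quad_prod (x : R) : x ^ 2 = 1 ->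
  derivable_pt_lim (fun z => z * quad_prod c m z) x ((INR m + 1) * quad_prod c m x).
Proof.
  intros Hx. eapply derivable_pt_lim_eq.
  - apply (derivable_pt_lim_mult id (quad_prod c m));
      [apply derivable_pt_lim_id | now apply derivable_pt_lim_quad_prod_unit].
  - unfold id. replace (x * (INR m * x * quad_prod c m x))
      with (INR m * x ^ 2 * quad_prod c m x) by ring.
    rewrite Hx. ring.
Qed.

Lemma derivable_pt_lim_id_mul_succ_quad_prod (x : R) : x ^ 2 = 1 ->
  derivable_pt_lim (fun z => z * (z + 1) * quad_prod c m z) x
    ((2 * x + 1 + INR m * (x + 1)) * quad_prod c m x).
Proof.
  intros Hx. eapply derivable_pt_lim_eq.
  - apply (derivable_pt_lim_mult (fun z => z * (z + 1)) (quad_prod c m));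
      [| now apply derivable_pt_lim_quad_prod_unit].
    apply is_derive_Reals. auto_derive; auto.
  - replace (x * (x + 1) * (INR m * x * quad_prod c m x))
      with (INR m * x ^ 2 * (x + 1) * quad_prod c m x) by ring.
    rewrite Hx. ring.
Qed.

Lemma quad_prod_one : quad_prod c m 1 = 2 ^ m * prodR m (fun j => 1 - c j).
Proof.
  unfold quad_prod. rewrite <- prodR_scale. apply prodR_ext. intros; ring.
Qed.

Lemma quad_prod_neg_one : quad_prod c m (-1) = 2 ^ m * prodR m (fun j => 1 + c j).
Proof.
  unfold quad_prod. rewrite <- prodR_scale. apply prodR_ext. intros; ring.
Qed.

End QuadProd.

Lemma one_sub_cos_pos (x : R) : 0 < x < PI -> 0 < 1 - cos x.
Proof.
  intros Hx. rewrite <- cos_0 at 1.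
  pose proof (cos_decreasing_1 0 x) as Hdec. lra.
Qed.

Lemma cot2_half_mul_one_sub_cos (x : R) : sin (x / 2) <> 0 ->
  cot2 (x / 2) * (1 - cos x) = 1 + cos x.
Proof.
  intros Hs. unfold cot2.
  replace x with (2 * (x / 2)) at 3 4 by field.
  pose proof (sin2_cos2 (x / 2)) as Hpyth. unfold Rsqr in Hpyth.
  rewrite cos_2a_sin.
  replace ((cos (x / 2) / sin (x / 2)) ^ 2 * (1 - (1 - 2 * sin (x / 2) * sin (x / 2))))
    with (2 * (cos (x / 2) * cos (x / 2))) by (field; exact Hs).
  lra.
Qed.

Lemma psi_pos_lt_PI (T N j : nat) : (1 <= T)%nat -> (1 <= j)%nat -> (2 * j < N)%nat ->
  0 < psi T N j < PI.
Proof.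
  intros hT hj hjN. unfold psi.
  apply le_INR in hT, hj. apply lt_INR in hjN. rewrite mult_INR in hjN. simpl in hT, hj, hjN.
  pose proof PI_RGT_0.
  assert (Ha : 0 < 2 + INR T * (2 * INR j - 1)) by nra.
  assert (Hab : 2 + INR T * (2 * INR j - 1) < 2 + (INR N - 1) * INR T) by nra.
  split.
  - apply Rdiv_lt_0_compat; nra.
  - apply Rlt_div_l; nra.
Qed.

Lemma prodR_one_add_cos_psi (T N m : nat) : (1 <= T)%nat -> (2 * m < N)%nat ->
  prodR m (fun j => 1 + cos (psi T N j)) =
  prodR m (fun j => cot2 (psi T N j / 2)) * prodR m (fun j => 1 - cos (psi T N j)).
Proof.
  intros hT hm. rewrite <- prodR_mul. apply prodR_ext. intros j Hj.
  pose proof (psi_pos_lt_PI T N j hT ltac:(lia) ltac:(lia)) as Hpsi.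
  rewrite cot2_half_mul_one_sub_cos; [reflexivity|].
  apply Rgt_not_eq, sin_gt_0; lra.
Qed.

Lemma prodR_one_sub_cos_psi_neq0 (T N m : nat) : (1 <= T)%nat -> (2 * m < N)%nat ->
  prodR m (fun j => 1 - cos (psi T N j)) <> 0.
Proof.
  intros hT hm. apply prodR_neq0. intros j Hj.
  apply Rgt_not_eq, one_sub_cos_pos, psi_pos_lt_PI; lia.
Qed.

Section Even.

Variables (T N m : nat).
Hypothesis HN : N = (2 * m + 2)%nat.

Let c := fun j => cos (psi T N j).

Lemma even_N : Nat.even N = true.
Proof. apply Nat.even_spec. exists (S m). lia. Qed.

Lemma half_N_sub_2 : ((N - 2) / 2 = m)%nat.
Proof. replace (N - 2)%nat with (m * 2)%nat by lia. apply Nat.div_mul. lia. Qed.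

Lemma eta_even : eta T N = fun z => z * (z + 1) * quad_prod c m z.
Proof. unfold eta, mN. rewrite even_N, half_N_sub_2. reflexivity. Qed.

Lemma invK_even : invK T N = 2 ^ m * prodR m (fun j => 1 - c j).
Proof.
  unfold invK. rewrite even_N, half_N_sub_2, pow_powerRZ.
  replace ((Z.of_nat N - 2) / 2)%Z with (Z.of_nat m); [reflexivity|].
  replace (Z.of_nat N - 2)%Z with (Z.of_nat m * 2)%Z by lia. now rewrite Z.div_mul.
Qed.

Lemma PN_even : PN T N =
  INR T / (2 + (INR N - 1) * INR T) * prodR m (fun j => cot2 (psi T N j / 2)).
Proof. unfold PN. rewrite even_N, half_N_sub_2. reflexivity. Qed.

Lemma mainTheorem3_even (hT : (1 <= T)%nat) (d1 dm1 : R)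
  (hd1 : derivable_pt_lim (eta T N) 1 d1)
  (hdm1 : derivable_pt_lim (eta T N) (-1) dm1) :
  q0_at T N 1 d1 = invK T N /\ / invK T N * q0_at T N (-1) dm1 = PN T N.
Proof.
  rewrite eta_even in hd1, hdm1.
  pose proof (uniqueness_limite _ _ _ _ hd1
    (derivable_pt_lim_id_mul_succ_quad_prod c m 1 ltac:(ring))) as Hd1.
  pose proof (uniqueness_limite _ _ _ _ hdm1
    (derivable_pt_lim_id_mul_succ_quad_prod c m (-1) ltac:(ring))) as Hdm1.
  pose proof (prodR_one_sub_cos_psi_neq0 T N m hT ltac:(lia)) as Hprod.
  assert (HNR : INR N = 2 * INR m + 2) by (rewrite HN, plus_INR, mult_INR; simpl; ring).
  assert (HTpos : 0 < INR T) by (apply lt_0_INR; lia).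
  pose proof (pos_INR m).
  unfold q0_at. rewrite eta_even, invK_even, PN_even, Hd1, Hdm1. cbv beta.
  rewrite quad_prod_one, quad_prod_neg_one. unfold c.
  rewrite (prodR_one_add_cos_psi T N m hT), HNR by lia.
  split; field; repeat split; try apply pow_nonzero; try exact Hprod; nra.
Qed.

End Even.

Section Odd.

Variables (T N m : nat).
Hypothesis HN : N = (2 * m + 1)%nat.

Let c := fun j => cos (psi T N j).

Lemma odd_N : Nat.even N = false.
Proof.
  rewrite <- Nat.negb_odd, (proj2 (Nat.odd_spec N)) by (exists m; lia). reflexivity.
Qed.

Lemma half_N_sub_1 : ((N - 1) / 2 = m)%nat.
Proof. replace (N - 1)%nat with (m * 2)%nat by lia. apply Nat.div_mul. lia. Qed.

Lemma eta_odd : eta T N = fun z => z * quad_prod c m z.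
Proof. unfold eta, mN. rewrite odd_N, half_N_sub_1. reflexivity. Qed.

Lemma invK_odd : invK T N = 2 ^ m / 2 * prodR m (fun j => 1 - c j).
Proof.
  unfold invK. rewrite odd_N, half_N_sub_1.
  replace ((Z.of_nat N - 3) / 2)%Z with (Z.of_nat m + -1)%Z.
  - rewrite powerRZ_add, <- pow_powerRZ by lra. unfold c. simpl. field.
  - replace (Z.of_nat N - 3)%Z with ((Z.of_nat m + -1) * 2)%Z by lia. now rewrite Z.div_mul.
Qed.

Lemma PN_odd : PN T N = prodR m (fun j => cot2 (psi T N j / 2)).
Proof. unfold PN. rewrite odd_N, half_N_sub_1. reflexivity. Qed.

Lemma mainTheorem3_odd (hT : (1 <= T)%nat) (d1 dm1 : R)
  (hd1 : derivable_pt_lim (eta T N) 1 d1)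
  (hdm1 : derivable_pt_lim (eta T N) (-1) dm1) :
  q0_at T N 1 d1 = invK T N /\ / invK T N * q0_at T N (-1) dm1 = PN T N.
Proof.
  rewrite eta_odd in hd1, hdm1.
  pose proof (uniqueness_limite _ _ _ _ hd1
    (derivable_pt_lim_id_mul_quad_prod c m 1 ltac:(ring))) as Hd1.
  pose proof (uniqueness_limite _ _ _ _ hdm1
    (derivable_pt_lim_id_mul_quad_prod c m (-1) ltac:(ring))) as Hdm1.
  pose proof (prodR_one_sub_cos_psi_neq0 T N m hT ltac:(lia)) as Hprod.
  assert (HNR : INR N = 2 * INR m + 1) by (rewrite HN, plus_INR, mult_INR; simpl; ring).
  assert (HTpos : 0 < INR T) by (apply lt_0_INR; lia).
  pose proof (pos_INR m).
  unfold q0_at. rewrite eta_odd, invK_odd, PN_odd, Hd1, Hdm1. cbv beta.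
  rewrite quad_prod_one, quad_prod_neg_one. unfold c.
  rewrite (prodR_one_add_cos_psi T N m hT), HNR by lia.
  split; field; repeat split; try apply pow_nonzero; try exact Hprod; nra.
Qed.

End Odd.

Theorem mainTheorem3 (T N : nat) (hT : (1 <= T)%nat) (hN : (1 <= N)%nat)
  (d1 dm1 : R)
  (hd1 : derivable_pt_lim (eta T N) 1 d1)
  (hdm1 : derivable_pt_lim (eta T N) (-1) dm1) :
  q0_at T N 1 d1 = invK T N /\
  / invK T N * q0_at T N (-1) dm1 = PN T N.
Proof.
  destruct (Nat.Even_or_Odd N) as [[k HN] | [m HN]].
  - destruct k as [|m]; [lia|].
    apply (mainTheorem3_even T N m); [lia | assumption ..].
  - now apply (mainTheorem3_odd T N m).
Qed.
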